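(* Consider two linear classifiers $h_1(x)=\mathbf 1(w_1^\top x\ge0)$ and $h_2(x)=\mathbf 1(w_2^\top x\ge0)$ on $\mathbb R^2$ with $\|w_i\|_2=1$, and let $0<\theta<\pi$ satisfy $\cos\theta=-w_1^\top w_2$. If $\pi/2\le\theta<\pi$, then for every agent $x^{(0)}\in\mathbb R^2$ there exists an optimal sequential strategy $(x^{(1)},x^{(2)})$ with $x^{(1)}=x^{(2)}$; i.e. $c^*_{\mathrm{seq}}(x^{(0)},\{h_1,h_2\})=c^*_{\mathrm{conj}}(x^{(0)},\{h_1,h_2\})$.
   Context: With Euclidean cost, $c^*_{\mathrm{seq}}(x^{(0)},\{h_1,h_2\})=\min\{\|x^{(1)}-x^{(0)}\|_2+\|x^{(2)}-x^{(1)}\|_2:h_1(x^{(1)})=1,h_2(x^{(2)})=1\}$, an optimal sequential strategy is a minimizing pair, and $c^*_{\mathrm{conj}}(x^{(0)},\{h_1,h_2\})=\min\{\|z-x^{(0)}\|_2:h_1(z)=h_2(z)=1\}$. *)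

From Stdlib Require Import Reals.
Open Scope R_scope.

Definition pt : Type := (R * R)%type.

Definition dot (u v : pt) : R := fst u * fst v + snd u * snd v.

Definition norm2 (u : pt) : R := sqrt (dot u u).

Definition dist2 (u v : pt) : R :=
  sqrt ((fst u - fst v)^2 + (snd u - snd v)^2).

(* linear classifier h(x) = 1(w^T x >= 0); "h x = 1" is rendered as a Prop *)
Definition accepts (w x : pt) : Prop := 0 <= dot w x.

Definition seq_cost (x0 x1 x2 : pt) : R := dist2 x1 x0 + dist2 x2 x1.

Definition optimal_seq (w1 w2 x0 x1 x2 : pt) : Prop :=
  accepts w1 x1 /\ accepts w2 x2 /\
  forall y1 y2 : pt, accepts w1 y1 -> accepts w2 y2 ->
    seq_cost x0 x1 x2 <= seq_cost x0 y1 y2.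

Definition optimal_conj (w1 w2 x0 z : pt) : Prop :=
  accepts w1 z /\ accepts w2 z /\
  forall y : pt, accepts w1 y -> accepts w2 y -> dist2 z x0 <= dist2 y x0.

From Stdlib Require Import Reals Lra Psatz.
Open Scope R_scope.

(* Since [w1 . w2 >= 0], the cone [C = {w1 . x >= 0, w2 . x >= 0}] is as close
   to any point of the half-plane [H1] as the half-plane [H2] is: projecting
   [y1] in [H1] orthogonally onto the boundary of [H2] stays in [H1].  Hence for
   every sequential strategy [(y1, y2)] there is [q] in [C] with
   [d(x0, q) <= d(x0, y1) + d(y1, q) <= d(x0, y1) + d(y1, y2)], so the point of
   [C] nearest to [x0], taken twice, is an optimal sequential strategy.  That
   nearest point is found among [x0], its projections onto the two boundary
   lines, and the apex [0]. *)

Lemma dist2_dist_euc (u v : pt) :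
  dist2 u v = dist_euc (fst u) (snd u) (fst v) (snd v).
Proof. unfold dist2, dist_euc; rewrite !Rsqr_pow2; reflexivity. Qed.

Lemma dist2_refl (u : pt) : dist2 u u = 0.
Proof. rewrite dist2_dist_euc; apply distance_refl. Qed.

Lemma dist2_triangle (u v x : pt) : dist2 u x <= dist2 u v + dist2 v x.
Proof. rewrite !dist2_dist_euc; apply triangle. Qed.

Definition sqdist (u v : pt) : R := (fst u - fst v)^2 + (snd u - snd v)^2.

Lemma dist2_le_sqdist (u v u' v' : pt) :
  sqdist u v <= sqdist u' v' -> dist2 u v <= dist2 u' v'.
Proof. apply sqrt_le_1_alt. Qed.

Lemma dot_unit (w : pt) : norm2 w = 1 -> dot w w = 1.
Proof.
  unfold norm2; intros Hw.
  rewrite <- (sqrt_sqrt (dot w w)), Hw; [ring|].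
  unfold dot; nra.
Qed.

(* For a unit [w], the foot of the perpendicular from [x] to the line [w^⊥]. *)
Definition proj_line (w x : pt) : pt :=
  (fst x - dot w x * fst w, snd x - dot w x * snd w).

Lemma dot_proj_line (v w x : pt) :
  dot v (proj_line w x) = dot v x - dot w x * dot v w.
Proof. unfold proj_line, dot; simpl; ring. Qed.

Lemma dot_proj_line_self (w x : pt) : dot w w = 1 -> dot w (proj_line w x) = 0.
Proof. intros Hw; rewrite dot_proj_line, Hw; ring. Qed.

Lemma sqdist_proj_line_le (w x q : pt) :
  dot w w = 1 -> dot w x <= 0 -> accepts w q ->
  sqdist (proj_line w x) x <= sqdist q x.
Proof.
  destruct w as [a b], x as [x1 x2], q as [q1 q2].
  unfold accepts, sqdist, proj_line, dot; cbn [fst snd]; intros Hw Hx Hq.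
  set (s := a * x1 + b * x2) in *.
  replace ((x1 - s * a - x1)^2 + (x2 - s * b - x2)^2) with (s^2 * (a * a + b * b))
    by ring.
  rewrite Hw.
  (* Cauchy-Schwarz, with [0 <= -s <= w . (q - x)] *)
  assert (CS : (a * (q1 - x1) + b * (q2 - x2))^2
               <= (a * a + b * b) * ((q1 - x1)^2 + (q2 - x2)^2))
    by (assert (H := pow2_ge_0 (a * (q2 - x2) - b * (q1 - x1))); nra).
  rewrite Hw in CS.
  assert (0 <= - s <= a * (q1 - x1) + b * (q2 - x2)) by (unfold s in *; lra).
  nra.
Qed.

Lemma optimal_conj_sym (w1 w2 x z : pt) :
  optimal_conj w1 w2 x z -> optimal_conj w2 w1 x z.
Proof. intros (H1 & H2 & Hmin); repeat split; auto. Qed.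

Lemma optimal_conj_self (w1 w2 x : pt) :
  accepts w1 x -> accepts w2 x -> optimal_conj w1 w2 x x.
Proof.
  intros H1 H2; repeat split; auto; intros.
  rewrite dist2_refl; apply sqrt_pos.
Qed.

Lemma optimal_conj_proj_line (w1 w2 x : pt) :
  dot w1 w1 = 1 -> dot w1 x <= 0 -> accepts w2 (proj_line w1 x) ->
  optimal_conj w1 w2 x (proj_line w1 x).
Proof.
  intros Hw Hx H2; repeat split; auto.
  - unfold accepts; rewrite dot_proj_line_self; lra.
  - intros q Hq _; apply dist2_le_sqdist, sqdist_proj_line_le; auto.
Qed.

(* [x] lies in the polar cone of [C] when both feet [proj_line w_i x] fall
   outside the other half-plane, by the decomposition
   [(1 - c^2) x = (w1 . proj_line w2 x) w1 + (w2 . proj_line w1 x) w2]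
   with [c = w1 . w2]. *)
Lemma optimal_conj_origin (w1 w2 x : pt) :
  dot w1 w1 = 1 -> dot w2 w2 = 1 -> 0 <= dot w1 w2 ->
  dot w1 (proj_line w2 x) < 0 -> dot w2 (proj_line w1 x) < 0 ->
  optimal_conj w1 w2 x (0, 0).
Proof.
  rewrite !dot_proj_line.
  destruct w1 as [a1 b1], w2 as [a2 b2], x as [x1 x2].
  unfold optimal_conj, accepts, dot; cbn [fst snd]; intros N1 N2 Hc P2 P1.
  split; [lra | split; [lra|]]; intros [q1 q2] Q1 Q2; cbn [fst snd] in Q1, Q2 |- *.
  replace (a2 * a1 + b2 * b1) with (a1 * a2 + b1 * b2) in P1 by ring.
  set (c := a1 * a2 + b1 * b2) in *.
  set (s1 := a1 * x1 + b1 * x2) in *; set (s2 := a2 * x1 + b2 * x2) in *.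
  assert (CS : c * c <= 1).
  { assert (c * c <= (a1 * a1 + b1 * b1) * (a2 * a2 + b2 * b2))
      by (assert (H := pow2_ge_0 (a1 * b2 - a2 * b1)); unfold c; nra).
    rewrite N1, N2 in *; lra. }
  assert (Hc1 : c * c < 1).
  { destruct (Rlt_le_dec (c * c) 1) as [|Hge]; [assumption|].
    assert (c * s2 <= c * (s1 * c)) by (apply Rmult_le_compat_l; lra).
    replace (c * (s1 * c)) with (s1 * (c * c)) in * by ring.
    replace (c * c) with 1 in * by lra.
    lra. }
  assert (Decomp : (1 - c * c) * (q1 * x1 + q2 * x2) =
    (s1 - s2 * c) * (a1 * q1 + b1 * q2) + (s2 - s1 * c) * (a2 * q1 + b2 * q2)).
  { assert (G : ((a1 * a1 + b1 * b1) * (a2 * a2 + b2 * b2) - c * c) * (q1 * x1 + q2 * x2) =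
      (s1 * (a2 * a2 + b2 * b2) - s2 * c) * (a1 * q1 + b1 * q2)
      + (s2 * (a1 * a1 + b1 * b1) - s1 * c) * (a2 * q1 + b2 * q2))
      by (unfold c, s1, s2; ring).
    rewrite N1, N2, !Rmult_1_r in G; exact G. }
  assert (Hqx : q1 * x1 + q2 * x2 <= 0).
  { assert ((s1 - s2 * c) * (a1 * q1 + b1 * q2) <= 0) by nra.
    assert ((s2 - s1 * c) * (a2 * q1 + b2 * q2) <= 0) by nra.
    destruct (Rle_lt_dec (q1 * x1 + q2 * x2) 0) as [|Hpos]; [assumption|].
    assert (0 < (1 - c * c) * (q1 * x1 + q2 * x2)) by (apply Rmult_lt_0_compat; lra).
    lra. }
  apply dist2_le_sqdist; unfold sqdist; cbn [fst snd]; nra.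
Qed.

Lemma exists_optimal_conj (w1 w2 x : pt) :
  dot w1 w1 = 1 -> dot w2 w2 = 1 -> 0 <= dot w1 w2 ->
  exists z, optimal_conj w1 w2 x z.
Proof.
  intros N1 N2 Hc.
  assert (Hc' : 0 <= dot w2 w1) by (unfold dot in *; lra).
  assert (P1 := dot_proj_line w2 w1 x); assert (P2 := dot_proj_line w1 w2 x).
  unfold accepts.
  destruct (Rle_lt_dec 0 (dot w1 x)) as [S1|S1];
  destruct (Rle_lt_dec 0 (dot w2 x)) as [S2|S2].
  - exists x; apply optimal_conj_self; auto.
  - destruct (Rle_lt_dec 0 (dot w1 (proj_line w2 x))) as [F2|F2].
    + exists (proj_line w2 x); apply optimal_conj_sym, optimal_conj_proj_line; auto; lra.
    + exists (0, 0); apply optimal_conj_origin; auto; nra.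
  - destruct (Rle_lt_dec 0 (dot w2 (proj_line w1 x))) as [F1|F1].
    + exists (proj_line w1 x); apply optimal_conj_proj_line; auto; lra.
    + exists (0, 0); apply optimal_conj_origin; auto; nra.
  - destruct (Rle_lt_dec 0 (dot w2 (proj_line w1 x))) as [F1|F1];
    [|destruct (Rle_lt_dec 0 (dot w1 (proj_line w2 x))) as [F2|F2]].
    + exists (proj_line w1 x); apply optimal_conj_proj_line; auto; lra.
    + exists (proj_line w2 x); apply optimal_conj_sym, optimal_conj_proj_line; auto; lra.
    + exists (0, 0); apply optimal_conj_origin; auto.
Qed.

Lemma exists_cone_point_closer (w1 w2 y1 y2 : pt) :
  dot w2 w2 = 1 -> 0 <= dot w1 w2 -> accepts w1 y1 -> accepts w2 y2 ->
  exists q, accepts w1 q /\ accepts w2 q /\ dist2 q y1 <= dist2 y2 y1.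
Proof.
  intros N2 Hc A1 A2; unfold accepts in *.
  destruct (Rle_lt_dec 0 (dot w2 y1)) as [S2|S2].
  - exists y1; rewrite dist2_refl; repeat split; auto; apply sqrt_pos.
  - exists (proj_line w2 y1); rewrite dot_proj_line, dot_proj_line_self; auto.
    repeat split; [nra | lra |].
    apply dist2_le_sqdist, sqdist_proj_line_le; auto; lra.
Qed.

Lemma optimal_seq_diag (w1 w2 x0 z : pt) :
  dot w2 w2 = 1 -> 0 <= dot w1 w2 ->
  optimal_conj w1 w2 x0 z -> optimal_seq w1 w2 x0 z z.
Proof.
  intros N2 Hc (Z1 & Z2 & Zmin); repeat split; auto.
  intros y1 y2 A1 A2; unfold seq_cost; rewrite dist2_refl.
  destruct (exists_cone_point_closer w1 w2 y1 y2) as (q & Q1 & Q2 & Hq); auto.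
  assert (Htri := dist2_triangle q y1 x0).
  assert (Hz := Zmin q Q1 Q2).
  lra.
Qed.

Theorem mainTheorem14 (w1 w2 : pt) (theta : R) :
  norm2 w1 = 1 -> norm2 w2 = 1 ->
  0 < theta < PI -> cos theta = - dot w1 w2 ->
  PI / 2 <= theta ->
  forall x0 : pt,
    exists x1 x2 : pt,
      optimal_seq w1 w2 x0 x1 x2 /\ x1 = x2 /\
      (forall z : pt, optimal_conj w1 w2 x0 z ->
         seq_cost x0 x1 x2 = dist2 z x0).
Proof.
  intros N1 N2 Htheta Hcos Hobtuse x0.
  apply dot_unit in N1; apply dot_unit in N2.
  assert (Hc : 0 <= dot w1 w2) by (assert (cos theta <= 0) by (apply cos_le_0; lra); lra).
  destruct (exists_optimal_conj w1 w2 x0) as [z Hz]; auto.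
  exists z, z; split; [apply optimal_seq_diag; auto | split; [reflexivity|]].
  intros z' Hz'; unfold seq_cost; rewrite dist2_refl, Rplus_0_r.
  destruct Hz as (Z1 & Z2 & Zmin), Hz' as (Z1' & Z2' & Zmin').
  apply Rle_antisym; auto.
Qed.
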